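(* Let $d\in\{2,3\}$, let $L,M,N$ be positive integers, $K:=dM+LN$. Let $\mathbf{A}\in\mathbb{R}^{dM\times dM}$, $\mathbf{C}\in\mathbb{R}^{LN\times LN}$ be symmetric positive definite, $\mathbf{B}\in\mathbb{R}^{dM\times LN}$ such that $\mathbf{E}=\begin{pmatrix}\mathbf{A}&\mathbf{B}\\ \mathbf{B}^\top&\mathbf{C}\end{pmatrix}$ is positive definite, $\mathbf{D}=\operatorname{diag}(D_1\mathbf{I}_{L\times L},\dots,D_N\mathbf{I}_{L\times L})$ with $D_i>0$, and $\mathbf{l}\in\mathbb{R}^{dM}$. Let $\mathbf{S}_i:\mathbb{R}^L\times\mathbb{R}^L\to\mathbb{R}^L$ ($i=1,\dots,N$) be semismooth, and define $\mathbf{F}(\mathbf{a},\mathbf{b},\mathbf{c})=(\mathbf{A}\mathbf{a}+\mathbf{B}\mathbf{b}+\mathbf{l},\ \mathbf{B}^\top\mathbf{a}+\mathbf{C}\mathbf{b}+\mathbf{D}\mathbf{c},\ \mathbf{S}_1(\mathbf{b}_1,\mathbf{c}_1),\dots,\mathbf{S}_N(\mathbf{b}_N,\mathbf{c}_N))$, where $\mathbf{b}_i=(b_{L(i-1)+1},\dots,b_{Li})^\top$ and $\mathbf{c}_i$ analogously. Let $(\mathbf{a}^*,\mathbf{b}^*,\mathbf{c}^* )$ be a solution of $\mathbf{F}(\mathbf{a}^*,\mathbf{b}^*,\mathbf{c}^* )=\mathbf{0}$, and let $\mathbf{H}\in\partial\mathbf{F}(\mathbf{a}^*,\mathbf{b}^*,\mathbf{c}^*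 )$, which has the form $\mathbf{H}=\begin{pmatrix}\mathbf{A}&\mathbf{B}&\mathbf{0}\\ \mathbf{B}^\top&\mathbf{C}&\mathbf{D}\\ \mathbf{0}&\mathbf{X}&\mathbf{Y}\end{pmatrix}$ with $\mathbf{X}=\operatorname{diag}(\mathbf{X}_1,\dots,\mathbf{X}_N)$, $\mathbf{Y}=\operatorname{diag}(\mathbf{Y}_1,\dots,\mathbf{Y}_N)$, $\mathbf{X}_i,\mathbf{Y}_i\in\mathbb{R}^{L\times L}$. Suppose the pair $(\mathbf{X}_i,\mathbf{Y}_i)$ is eigencomplementary for every $i\in\{1,\dots,N\}$. Then the Schur complement $\mathbf{S}_{\mathbf{H}}:=\mathbf{Y}-\mathbf{X}\mathbf{S}_{\mathbf{E}}^{-1}\mathbf{D}$ of $\mathbf{H}$ with respect to $\mathbf{E}$, where $\mathbf{S}_{\mathbf{E}}:=\mathbf{C}-\mathbf{B}^\top\mathbf{A}^{-1}\mathbf{B}$, is regular (invertible).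
   Context: Semismoothness is in the sense of Qi and Sun (1993). $\partial\mathbf{F}(\mathbf{x})$ denotes the Clarke subdifferential: the convex hull of all limits $\lim_n\nabla\mathbf{F}(\mathbf{x}_n)$ with $\mathbf{x}_n\to\mathbf{x}$ and $\mathbf{F}$ differentiable at each $\mathbf{x}_n$. A pair $(\mathbf{F},\mathbf{G})$ of real symmetric $L\times L$ matrices is called eigencomplementary if $\mathbf{F}$ is negative semi-definite, $\mathbf{G}$ is positive semi-definite, they have a common basis of eigenvectors of $\mathbb{R}^L$, and, if both are singular, additionally $\bigoplus_{\xi\in\sigma(\mathbf{F}),\,\xi<0}\operatorname{Eig}_{\mathbf{F}}(\xi)=\operatorname{Eig}_{\mathbf{G}}(0)$ ($\sigma$ = spectrum, $\operatorname{Eig}$ = eigenspace). *)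

From HB Require Import structures.
From mathcomp Require Import all_boot all_order all_algebra.
From mathcomp Require Import all_classical all_reals all_analysis.
Set Implicit Arguments. Unset Strict Implicit. Unset Printing Implicit Defensive.
Import Order.TTheory GRing.Theory Num.Theory.
Import numFieldNormedType.Exports.
Local Open Scope classical_set_scope.
Local Open Scope ring_scope.

Section Defs.
Variable R : realType.

Definition jacobian_at n m (G : 'cV[R]_n -> 'cV[R]_m) (x : 'cV[R]_n)
    (J : 'M[R]_(m, n)) : Prop :=
  differentiable G x /\ forall h : 'cV[R]_n, 'd G x h = J *m h.

Definition bouligand_sub n m (G : 'cV[R]_n -> 'cV[R]_m) (x : 'cV[R]_n) :
    set 'M[R]_(m, n) :=
  [set J | exists (xs : nat -> 'cV[R]_n) (Js : nat -> 'M[R]_(m, n)),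
      xs @ \oo --> x /\ (forall k, jacobian_at G (xs k) (Js k)) /\
      Js @ \oo --> J].

Definition conv_hull n m (S : set 'M[R]_(m, n)) : set 'M[R]_(m, n) :=
  [set H | exists (p : nat) (w : 'I_p -> R) (Js : 'I_p -> 'M[R]_(m, n)),
      (forall k, 0 <= w k) /\ \sum_(k < p) w k = 1 /\
      (forall k, S (Js k)) /\ H = \sum_(k < p) w k *: Js k].

Definition clarke n m (G : 'cV[R]_n -> 'cV[R]_m) (x : 'cV[R]_n) :=
  conv_hull (bouligand_sub G x).

Definition locally_lipschitz_at n m (G : 'cV[R]_n -> 'cV[R]_m) (x : 'cV[R]_n) :=
  exists (k : R) (del : R), 0 < del /\
    forall y z : 'cV[R]_n, `|y - x| < del -> `|z - x| < del ->
      `|G y - G z| <= k * `|y - z|.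

(* Semismoothness in the sense of Qi and Sun (1993): G is locally Lipschitz
   at x and for every h the limit of V h' over V in dG(x + t h'),
   h' -> h, t -> 0+ exists. *)
Definition semismooth_at n m (G : 'cV[R]_n -> 'cV[R]_m) (x : 'cV[R]_n) :=
  locally_lipschitz_at G x /\
  forall h : 'cV[R]_n, exists lim : 'cV[R]_m,
    forall e : R, 0 < e -> exists del : R, 0 < del /\
      forall (t : R) (h' : 'cV[R]_n) (V : 'M[R]_(m, n)),
        0 < t -> t < del -> `|h' - h| < del ->
        clarke G (x + t *: h') V -> `|V *m h' - lim| < e.

Definition semismooth n m (G : 'cV[R]_n -> 'cV[R]_m) :=
  forall x, semismooth_at G x.

Definition symmetricmx n (P : 'M[R]_n) := P^T = P.

Definition posdef n (P : 'M[R]_n) :=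
  symmetricmx P /\ forall v : 'cV[R]_n, v != 0 -> 0 < (v^T *m P *m v) 0 0.

Definition possemidef n (P : 'M[R]_n) :=
  forall v : 'cV[R]_n, 0 <= (v^T *m P *m v) 0 0.

Definition negsemidef n (P : 'M[R]_n) :=
  forall v : 'cV[R]_n, (v^T *m P *m v) 0 0 <= 0.

Definition eigencomplementary n (F G : 'M[R]_n) : Prop :=
  [/\ symmetricmx F /\ symmetricmx G, negsemidef F, possemidef G,
      (exists P : 'M[R]_n, P \in unitmx /\
         forall j, exists a b : R,
           F *m col j P = a *: col j P /\ G *m col j P = b *: col j P) &
      (* if both singular: sum of eigenspaces of F for negative eigenvalues
         equals the eigenspace (kernel) of G for eigenvalue 0 *)
      (F \notin unitmx -> G \notin unitmx ->
        forall v : 'cV[R]_n,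
          (G *m v = 0 *: v) <->
          exists (p : nat) (xi : 'I_p -> R) (vs : 'I_p -> 'cV[R]_n),
            (forall k, xi k < 0 /\ F *m vs k = xi k *: vs k) /\
            v = \sum_(k < p) vs k)].

(* block vectors / block-diagonal matrices with N blocks of size L;
   block i occupies indices mxvec_index i j = L*i + j, j < L *)
Definition blockv N L (b : 'cV[R]_(N * L)) (i : 'I_N) : 'cV[R]_L :=
  \col_j b (mxvec_index i j) 0.

Definition stackv N L (f : 'I_N -> 'cV[R]_L) : 'cV[R]_(N * L) :=
  (mxvec (\matrix_(i < N, j < L) f i j 0))^T.

Definition blkdiag N L (Xs : 'I_N -> 'M[R]_L) : 'M[R]_(N * L) :=
  \matrix_(p, q) \sum_(i < N) \sum_(j < L) \sum_(k < L)
     (if (p == mxvec_index i j) && (q == mxvec_index i k)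
      then Xs i j k else 0).

Definition Fmap dM N L (A : 'M[R]_dM) (B : 'M[R]_(dM, N * L))
    (C : 'M[R]_(N * L)) (D : 'M[R]_(N * L)) (l : 'cV[R]_dM)
    (S : 'I_N -> 'cV[R]_L -> 'cV[R]_L -> 'cV[R]_L)
    (z : 'cV[R]_(dM + (N * L + N * L))) : 'cV[R]_(dM + (N * L + N * L)) :=
  let a := usubmx z in
  let b := usubmx (dsubmx z) in
  let c := dsubmx (dsubmx z) in
  col_mx (A *m a + B *m b + l)
    (col_mx (B^T *m a + C *m b + D *m c)
            (stackv (fun i => S i (blockv b i) (blockv c i)))).

End Defs.

(* Let P := S_E^-1, positive definite since S_E is the Schur complement of A in
   the positive definite E.  If (Y - X P D) v = 0, write v = Q g and P D v = Q h in
   the common eigenbasis Q := diag(Q_1, ..., Q_N) of X, Y and D, with eigenvalues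
   a_k <= 0, b_k >= 0 (never both 0) and d_k > 0.  Then b_k g_k = a_k h_k, so
   g_k = 0 whenever a_k = 0, and
     (D v)^T P (D v) = - g^T diag(s) Q^T Q g,   s_k = - d_k b_k / a_k >= 0.
   Q need not be orthogonal, but eigenvectors of a symmetric matrix for distinct
   eigenvalues are orthogonal, so Q^T Q commutes with every diagonal matrix whose
   entries depend only on the eigenvalues; hence the right-hand side equals
   - |Q diag(sqrt s) g|^2 <= 0.  Positivity of P forces D v = 0, hence v = 0. *)

From Pilot Require Import Defs.
From HB Require Import structures.
From mathcomp Require Import all_boot all_order all_algebra.
From mathcomp Require Import all_classical all_reals all_analysis.
Import Order.TTheory GRing.Theory Num.Theory.
Import numFieldNormedType.Exports.
Local Open Scope classical_set_scope.
Local Open Scope ring_scope.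

Set Implicit Arguments. Unset Strict Implicit. Unset Printing Implicit Defensive.

Section SumOfSquares.
Variable R : realDomainType.

Lemma tr_mulmx_selfE n (x : 'cV[R]_n) : (x^T *m x) 0 0 = \sum_i x i 0 ^+ 2.
Proof. by rewrite mxE; apply: eq_bigr => i _; rewrite mxE expr2. Qed.

Lemma tr_mulmx_self_ge0 n (x : 'cV[R]_n) : 0 <= (x^T *m x) 0 0.
Proof. by rewrite tr_mulmx_selfE sumr_ge0 // => i _; rewrite sqr_ge0. Qed.

Lemma tr_mulmx_self_eq0 n (x : 'cV[R]_n) : ((x^T *m x) 0 0 == 0) = (x == 0).
Proof.
apply/idP/eqP => [|->]; last by rewrite mulmx0 mxE.
rewrite tr_mulmx_selfE psumr_eq0 => [/allP x0|i _]; last exact: sqr_ge0.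
apply/matrixP => i j; rewrite (ord1 j) mxE.
by have := x0 i (mem_index_enum _); rewrite sqrf_eq0 => /eqP.
Qed.

End SumOfSquares.

Section FieldMatrix.
Variable F : fieldType.

Lemma unitmx_kerP n (A : 'M[F]_n) :
  reflect (forall v : 'cV_n, A *m v = 0 -> v = 0) (A \in unitmx).
Proof.
apply: (iffP idP) => [Au v Av0 | ker0]; first by rewrite -(mulKmx Au v) Av0 mulmx0.
rewrite -unitmx_tr -row_free_unit -kermx_eq0; apply/eqP/row_matrixP => i.
have /(congr1 trmx) : row i (kermx A^T) *m A^T = 0 by apply/sub_kermxP; rewrite row_sub.
by rewrite trmx_mul trmxK trmx0 row0 => /ker0 /(congr1 trmx); rewrite trmxK trmx0.
Qed.

Lemma unitmx_col_neq0 n (A : 'M[F]_n) j : A \in unitmx -> col j A != 0.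
Proof.
move=> /unitmx_kerP Aker; rewrite colE; apply/eqP => /Aker /matrixP /(_ j 0).
by rewrite !mxE !eqxx /= => /eqP; rewrite oner_eq0.
Qed.

Lemma diag_mx_invK n (a : 'rV[F]_n) (g : 'cV[F]_n) :
  (forall k, a 0 k = 0 -> g k 0 = 0) ->
  diag_mx a *m (diag_mx (map_mx GRing.inv a) *m g) = g.
Proof.
move=> g0; apply/matrixP => k j; rewrite (ord1 j) !mul_diag_mx !mxE.
have [ak0|ak_neq0] := eqVneq (a 0 k) 0; first by rewrite g0 // !mulr0.
by rewrite mulrA mulfV // mul1r.
Qed.

End FieldMatrix.

Section CommDiag.
Variable R : idomainType.

Lemma comm_diag_mxP n (G : 'M[R]_n) (e : 'rV[R]_n) :
  comm_mx G (diag_mx e) <-> forall j k, G j k != 0 -> e 0 j = e 0 k.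
Proof.
rewrite /comm_mx mul_mx_diag mul_diag_mx; split => [/matrixP GE j k Gjk | Ge].
  by apply: (mulIf Gjk); have := GE j k; rewrite !mxE mulrC => ->.
apply/matrixP => j k; rewrite !mxE.
by have [->|/Ge->] := eqVneq (G j k) 0; rewrite ?mulr0 ?mul0r // mulrC.
Qed.

Lemma gram_comm_diag m n (M : 'M[R]_m) (Q : 'M[R]_(m, n)) (e : 'rV[R]_n) :
  M^T = M -> M *m Q = Q *m diag_mx e -> comm_mx (Q^T *m Q) (diag_mx e).
Proof.
move=> Msym MQ; rewrite /comm_mx -mulmxA -MQ mulmxA.
by rewrite -{1}Msym -trmx_mul MQ trmx_mul tr_diag_mx mulmxA.
Qed.

End CommDiag.

Section GramForm.
Variable R : rcfType.

Lemma gram_diag_qform_ge0 m n (Q : 'M[R]_(m, n)) (s : 'rV[R]_n) (g : 'cV[R]_n) :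
  comm_mx (Q^T *m Q) (diag_mx s) -> (forall k, 0 <= s 0 k) ->
  0 <= (g^T *m diag_mx s *m (Q^T *m Q) *m g) 0 0.
Proof.
move=> Gs s_ge0; set t := map_mx Num.sqrt s.
have st : diag_mx s = diag_mx t *m diag_mx t.
  by rewrite mulmx_diag; congr diag_mx; apply/rowP => k; rewrite !mxE -expr2 sqr_sqrtr.
have Gt : comm_mx (Q^T *m Q) (diag_mx t).
  by apply/comm_diag_mxP => j k /((comm_diag_mxP _ _).1 Gs) sjk; rewrite !mxE sjk.
suff -> : g^T *m diag_mx s *m (Q^T *m Q) *m g =
          (Q *m (diag_mx t *m g))^T *m (Q *m (diag_mx t *m g)).
  exact: tr_mulmx_self_ge0.
rewrite st !trmx_mul tr_diag_mx -!mulmxA; congr (_ *m (_ *m _)).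
by rewrite !mulmxA Gt !mulmxA.
Qed.

Lemma gram_codiag_qform_le0 m n (Q : 'M[R]_(m, n)) (a b d : 'rV[R]_n)
    (g h : 'cV[R]_n) :
  comm_mx (Q^T *m Q) (diag_mx a) -> comm_mx (Q^T *m Q) (diag_mx b) ->
  comm_mx (Q^T *m Q) (diag_mx d) ->
  (forall k, a 0 k <= 0) -> (forall k, 0 <= b 0 k) -> (forall k, 0 <= d 0 k) ->
  (forall k, a 0 k = 0 -> b 0 k != 0) ->
  diag_mx b *m g = diag_mx a *m h ->
  ((diag_mx d *m g)^T *m (Q^T *m Q) *m h) 0 0 <= 0.
Proof.
set G := Q^T *m Q => Ga Gb Gd a_le0 b_ge0 d_ge0 ab bg_ah.
have g0 k : a 0 k = 0 -> g k 0 = 0.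
  move=> ak0; have /matrixP/(_ k 0) := bg_ah; rewrite !mul_diag_mx !mxE ak0 mul0r.
  by move/eqP; rewrite mulf_eq0 (negPf (ab k ak0)) => /eqP.
(* [(a 0 k)^-1 = 0] when [a 0 k = 0], where [g k 0 = 0] anyway. *)
pose s := \row_k - ((a 0 k)^-1 * d 0 k * b 0 k).
have sE : diag_mx s = - (diag_mx (map_mx GRing.inv a) *m diag_mx d *m diag_mx b).
  by rewrite !mulmx_diag -raddfN; congr diag_mx; apply/rowP => k; rewrite !mxE.
have Gh : diag_mx a *m (G *m h) = diag_mx b *m (G *m g).
  by rewrite mulmxA -Ga -mulmxA -bg_ah mulmxA Gb -mulmxA.
have -> : (diag_mx d *m g)^T *m G *m h = - (g^T *m diag_mx s *m G *m g).
  rewrite -{1}(diag_mx_invK g0) trmx_mul tr_diag_mx.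
  transitivity ((diag_mx (map_mx GRing.inv a) *m g)^T *m diag_mx d *m
                (diag_mx a *m (G *m h))).
    rewrite trmx_mul tr_diag_mx -!mulmxA.
    by rewrite [diag_mx a *m (diag_mx d *m _)]mulmxA diag_mxC -mulmxA.
  by rewrite Gh sE mulmxN !mulNmx opprK trmx_mul tr_diag_mx !mulmxA.
have Gs : comm_mx G (diag_mx s).
  apply/comm_diag_mxP => j k Gjk.
  have same e : comm_mx G (diag_mx e) -> e 0 j = e 0 k.
    by move=> Ge; apply: (comm_diag_mxP G e).1 Gjk.
  by rewrite !mxE (same _ Ga) (same _ Gb) (same _ Gd).
rewrite mxE oppr_le0 gram_diag_qform_ge0 // => k.
by rewrite mxE oppr_ge0 mulr_le0_ge0 // mulr_le0_ge0 ?invr_le0.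
Qed.

End GramForm.

Section Rayleigh.
Variable R : realFieldType.

(* Names the eigenvalue of an eigenvector, so that eigenvalues need not be chosen. *)
Definition rayleigh n (F : 'M[R]_n) (v : 'cV[R]_n) :=
  (v^T *m F *m v) 0 0 / (v^T *m v) 0 0.

Lemma eigen_qform n (F : 'M[R]_n) (v : 'cV[R]_n) x :
  F *m v = x *: v -> (v^T *m F *m v) 0 0 = x * (v^T *m v) 0 0.
Proof. by move=> Fv; rewrite -mulmxA Fv -scalemxAr mxE. Qed.

Lemma eigen_rayleigh n (F : 'M[R]_n) (v : 'cV[R]_n) x :
  v != 0 -> F *m v = x *: v -> rayleigh F v = x.
Proof.
by move=> v0 /eigen_qform Fv; rewrite /rayleigh Fv mulfK // tr_mulmx_self_eq0.
Qed.

Lemma symmetric_eigen_orthogonal n (F : 'M[R]_n) (v w : 'cV[R]_n) x y :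
  F^T = F -> F *m v = x *: v -> F *m w = y *: w -> x != y -> v^T *m w = 0.
Proof.
move=> Fsym Fv Fw xy.
have : x *: (v^T *m w) = y *: (v^T *m w).
  by rewrite scalemxAl -linearZ /= -Fv trmx_mul Fsym -mulmxA Fw scalemxAr.
by move/eqP; rewrite -subr_eq0 -scalerBl scalemx_eq0 subr_eq0 (negbTE xy) => /eqP.
Qed.

End Rayleigh.

Section MxvecIndex.
Variables (m n : nat).

Lemma mxvec_index_eq (i i' : 'I_m) (j j' : 'I_n) :
  (mxvec_index i j == mxvec_index i' j') = (i == i') && (j == j').
Proof.
have inj : injective (uncurry (@mxvec_index m n)).
  by move=> [a b] [a' b'] /= /cast_ord_inj /enum_rank_inj.
by rewrite (inj_eq inj (i, j) (i', j')) xpair_eqE.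
Qed.

Lemma big_mxvec_index (V : nmodType) (f : 'I_(m * n) -> V) :
  \sum_k f k = \sum_i \sum_j f (mxvec_index i j).
Proof. by rewrite (reindex _ (curry_mxvec_bij _ _)) pair_bigA; apply: eq_bigr => -[]. Qed.

Lemma mxvec_index_matrixP T p q (A B : 'M[T]_(m * n, p * q)) :
  (forall i j i' j', A (mxvec_index i j) (mxvec_index i' j') =
                     B (mxvec_index i j) (mxvec_index i' j')) -> A = B.
Proof.
by move=> AB; apply/matrixP => k l; case/mxvec_indexP: k => i j;
  case/mxvec_indexP: l => i' j'.
Qed.

End MxvecIndex.

Section PositiveDefinite.
Variable R : realType.

Lemma posdef_unit n (M : 'M[R]_n) : posdef M -> M \in unitmx.
Proof.
move=> [_ Mpos]; apply/unitmx_kerP => v Mv0; apply/eqP; apply: contraLR isT => v0.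
by have := Mpos v v0; rewrite -mulmxA Mv0 mulmx0 mxE ltxx.
Qed.

Lemma posdef_schur m n (A : 'M[R]_m) (B : 'M[R]_(m, n)) (C : 'M[R]_n) :
  posdef A -> posdef (block_mx A B B^T C) -> posdef (C - B^T *m invmx A *m B).
Proof.
move=> hA [Esym Epos]; have Au := posdef_unit hA; have [Asym _] := hA.
have Csym : C^T = C.
  by have := congr1 drsubmx Esym; rewrite tr_block_mx !block_mxKdr.
split.
  by rewrite /Defs.symmetricmx raddfB /= Csym !trmx_mul trmxK trmx_inv Asym mulmxA.
move=> z z0; set y := col_mx (- (invmx A *m B *m z)) z.
have y0 : y != 0.
  by apply: contraNneq z0 => /(congr1 dsubmx); rewrite /y col_mxKd linear0 => ->.
have := Epos y y0; rewrite -mulmxA mul_block_col tr_col_mx mul_row_col.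
rewrite !mulmxN !mulmxA mulmxV // mul1mx addNr mulmx0 add0r.
by rewrite -[z^T *m _ *m z]mulmxA mulmxBl addrC.
Qed.

Lemma posdef_inv n (M : 'M[R]_n) : posdef M -> posdef (invmx M).
Proof.
move=> hM; have Mu := posdef_unit hM; have [Msym Mpos] := hM.
split; first by rewrite /Defs.symmetricmx trmx_inv Msym.
move=> v v0; set w := invmx M *m v.
have vE : v = M *m w by rewrite mulKVmx.
rewrite -mulmxA -/w {1}vE trmx_mul Msym; apply: Mpos.
by apply: contraNneq v0 => w0; rewrite vE w0 mulmx0.
Qed.

Lemma codiagonal_schur_unitmx n (X Y D P Q : 'M[R]_n) (a b d : 'rV[R]_n) :
  X^T = X -> Y^T = Y -> D^T = D -> Q \in unitmx ->
  X *m Q = Q *m diag_mx a -> Y *m Q = Q *m diag_mx b -> D *m Q = Q *m diag_mx d ->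
  (forall k, [/\ a 0 k <= 0, 0 <= b 0 k, 0 < d 0 k & a 0 k = 0 -> b 0 k != 0]) ->
  posdef P -> Y - X *m P *m D \in unitmx.
Proof.
move=> Xsym Ysym Dsym Qu XQ YQ DQ eig [_ Ppos].
have /all_and4[a_le0 b_ge0 d_gt0 ab] := eig.
have Qinj := can_inj (mulKmx Qu).
have coord (z : 'cV_n) : exists c, z = Q *m c by exists (invmx Q *m z); rewrite mulKVmx.
apply/unitmx_kerP => v; set w := P *m (D *m v).
have [[g vE] [h wE]] := (coord v, coord w).
rewrite mulmxBl -!mulmxA -/w => /eqP; rewrite subr_eq0 => /eqP Yv_Xw.
have bg_ah : diag_mx b *m g = diag_mx a *m h.
  by apply: Qinj; rewrite !mulmxA -YQ -XQ -!mulmxA -vE -wE.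
have Dv : D *m v = Q *m (diag_mx d *m g) by rewrite vE mulmxA DQ mulmxA.
have Dv0 : D *m v = 0.
  have := gram_codiag_qform_le0 (gram_comm_diag Xsym XQ) (gram_comm_diag Ysym YQ)
    (gram_comm_diag Dsym DQ) a_le0 b_ge0 (fun k => ltW (d_gt0 k)) ab bg_ah.
  rewrite !mulmxA => le0; apply/eqP; apply: contraT => /Ppos.
  by rewrite -mulmxA -/w wE {1}Dv trmx_mul !mulmxA ltNge le0.
suff g_eq0 : g = 0 by rewrite vE g_eq0 mulmx0.
apply/matrixP => k j; rewrite (ord1 j).
have /matrixP/(_ k 0) : diag_mx d *m g = 0 by apply: Qinj; rewrite -Dv Dv0 mulmx0.
by rewrite mul_diag_mx !mxE => /eqP; rewrite mulf_eq0 gt_eqF ?d_gt0 // => /eqP.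
Qed.

End PositiveDefinite.

Section Eigencomplementary.
Variable R : realType.

Lemma eigencomplementary_eigenvalues L (F G : 'M[R]_L) (v : 'cV[R]_L) x y :
  eigencomplementary F G -> v != 0 -> F *m v = x *: v -> G *m v = y *: v ->
  [/\ x <= 0, 0 <= y & x = 0 -> y != 0].
Proof.
move=> [[Fsym _] Fle0 Gge0 _ Fker] v0 Fv Gv.
have vv : 0 < (v^T *m v) 0 0 by rewrite lt0r tr_mulmx_self_eq0 v0 tr_mulmx_self_ge0.
split; first by have := Fle0 v; rewrite (eigen_qform Fv) pmulr_lle0.
  by have := Gge0 v; rewrite (eigen_qform Gv) pmulr_lge0.
move=> x0; apply/eqP => y0.
have Fv0 : F *m v = 0 *: v by rewrite Fv x0.
have Gv0 : G *m v = 0 *: v by rewrite Gv y0.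
have nonunit M : M *m v = 0 *: v -> M \notin unitmx.
  by rewrite scale0r => Mv0; apply/unitmx_kerP => /(_ v Mv0) /eqP; rewrite (negbTE v0).
have [p [xi [vs [vs_eigen vE]]]] := (Fker (nonunit _ Fv0) (nonunit _ Gv0) v).1 Gv0.
suff vv0 : v^T *m v = 0 by rewrite vv0 mxE ltxx in vv.
rewrite {2}vE mulmx_sumr big1 // => k _; have [xi_lt0 Fvk] := vs_eigen k.
by apply: (symmetric_eigen_orthogonal Fsym Fv0 Fvk); rewrite eq_sym ltr0_neq0.
Qed.

Lemma eigencomplementary_eigenbasis L (F G : 'M[R]_L) :
  eigencomplementary F G -> exists P, [/\ P \in unitmx,
    forall j, F *m col j P = rayleigh F (col j P) *: col j P,
    forall j, G *m col j P = rayleigh G (col j P) *: col j P &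
    forall j, [/\ rayleigh F (col j P) <= 0, 0 <= rayleigh G (col j P)
      & rayleigh F (col j P) = 0 -> rayleigh G (col j P) != 0]].
Proof.
move=> FG; have [_ _ _ [P [Pu eig]] _] := FG.
have eigR j : F *m col j P = rayleigh F (col j P) *: col j P /\
              G *m col j P = rayleigh G (col j P) *: col j P.
  have [x [y [Fv Gv]]] := eig j; have v0 := unitmx_col_neq0 j Pu.
  by rewrite (eigen_rayleigh v0 Fv) (eigen_rayleigh v0 Gv).
exists P; split => // [j|j|j]; try by case: (eigR j).
have [Fv Gv] := eigR j.
exact: eigencomplementary_eigenvalues FG (unitmx_col_neq0 j Pu) Fv Gv.
Qed.

End Eigencomplementary.

Section BlockDiagonal.
Variables (R : realType) (N L : nat).
Implicit Types (Ms Ps : 'I_N -> 'M[R]_L).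

Lemma blkdiagE Ms i j i' k :
  blkdiag Ms (mxvec_index i j) (mxvec_index i' k) = if i == i' then Ms i j k else 0.
Proof.
rewrite mxE (bigD1 i) //= [X in _ + X]big1 ?addr0 => [|i0 /negPf i0i]; last first.
  apply: big1 => j0 _; apply: big1 => k0 _.
  by rewrite !mxvec_index_eq [i == i0]eq_sym i0i.
rewrite (bigD1 j) //= [X in _ + X]big1 ?addr0 => [|j0 /negPf j0j]; last first.
  by apply: big1 => k0 _; rewrite !mxvec_index_eq [j == j0]eq_sym j0j andbF.
rewrite (bigD1 k) //= [X in _ + X]big1 ?addr0 => [|k0 /negPf k0k]; last first.
  by rewrite !mxvec_index_eq [k == k0]eq_sym k0k !andbF.
by rewrite !mxvec_index_eq !eqxx !andbT eq_sym.
Qed.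

Lemma blkdiag_mul Ms Ps : blkdiag Ms *m blkdiag Ps = blkdiag (fun i => Ms i *m Ps i).
Proof.
apply: mxvec_index_matrixP => i j i' k; rewrite blkdiagE mxE big_mxvec_index.
rewrite (bigD1 i) //= [X in _ + X]big1 => [|i0 /negPf i0i]; last first.
  by apply: big1 => l _; rewrite blkdiagE eq_sym i0i mul0r.
rewrite addr0; have [<-|i'i] := eqVneq i i'.
  by rewrite mxE; apply: eq_bigr => l _; rewrite !blkdiagE eqxx.
by apply: big1 => l _; rewrite !blkdiagE eqxx (negbTE i'i) mulr0.
Qed.

Lemma blkdiag1 : blkdiag (fun=> 1%:M) = 1%:M :> 'M[R]_(N * L).
Proof.
apply: mxvec_index_matrixP => i j i' k.
by rewrite blkdiagE !mxE mxvec_index_eq; case: (i == i'); rewrite ?mulr0n.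
Qed.

Lemma blkdiag_unit Ps : (forall i, Ps i \in unitmx) -> blkdiag Ps \in unitmx.
Proof.
move=> Pu; suff : blkdiag (fun i => invmx (Ps i)) *m blkdiag Ps = 1%:M.
  by case/mulmx1_unit.
by rewrite blkdiag_mul -blkdiag1; congr blkdiag; apply: funext => i; rewrite mulVmx.
Qed.

Lemma blkdiag_symmetric Ms : (forall i, (Ms i)^T = Ms i) -> (blkdiag Ms)^T = blkdiag Ms.
Proof.
move=> Msym; apply: mxvec_index_matrixP => i j i' k.
rewrite mxE !blkdiagE eq_sym; have [<-|//] := eqVneq i i'.
by rewrite -[in RHS]Msym mxE.
Qed.

Lemma blkdiag_diag (e : 'I_N -> 'I_L -> R) :
  blkdiag (fun i => diag_mx (\row_j e i j)) = diag_mx (mxvec (\matrix_(i, j) e i j)).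
Proof.
apply: mxvec_index_matrixP => i j i' k.
rewrite blkdiagE !mxE mxvec_index_eq mxvecE mxE.
by case: (i == i'); rewrite ?mulr0n.
Qed.

Lemma mulmx_eigen_cols (M P : 'M[R]_L) (e : 'I_L -> R) :
  (forall j, M *m col j P = e j *: col j P) -> M *m P = P *m diag_mx (\row_j e j).
Proof.
move=> eig; apply/matrixP => p q; have /matrixP/(_ p 0) := eig q.
rewrite [in LHS]colE mulmxA -colE.
by rewrite mul_mx_diag !mxE => ->; rewrite mulrC.
Qed.

Lemma blkdiag_eigenbasis Ms Ps (e : 'I_N -> 'I_L -> R) :
  (forall i j, Ms i *m col j (Ps i) = e i j *: col j (Ps i)) ->
  blkdiag Ms *m blkdiag Ps = blkdiag Ps *m diag_mx (mxvec (\matrix_(i, j) e i j)).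
Proof.
move=> eig; rewrite -blkdiag_diag !blkdiag_mul; congr blkdiag.
by apply: funext => i; apply: mulmx_eigen_cols.
Qed.

End BlockDiagonal.

Unset Implicit Arguments.

Theorem lemma3p1 (R : realType) (d L M N : nat)
  (hd : (d == 2%N) || (d == 3%N)) (hL : (0 < L)%N) (hM : (0 < M)%N) (hN : (0 < N)%N)
  (A : 'M[R]_(d * M)) (B : 'M[R]_(d * M, N * L)) (C : 'M[R]_(N * L))
  (hA : posdef A) (hC : posdef C) (hE : posdef (block_mx A B B^T C))
  (Dv : 'I_N -> R) (hD : forall i, 0 < Dv i)
  (l : 'cV[R]_(d * M))
  (S : 'I_N -> 'cV[R]_L -> 'cV[R]_L -> 'cV[R]_L)
  (hS : forall i, semismooth (fun w : 'cV[R]_(L + L) => S i (usubmx w) (dsubmx w)))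
  (a : 'cV[R]_(d * M)) (b c : 'cV[R]_(N * L))
  (hsol : Fmap A B C (blkdiag (fun i => (Dv i)%:M)) l S (col_mx a (col_mx b c)) = 0)
  (Xs Ys : 'I_N -> 'M[R]_L)
  (H : 'M[R]_(d * M + (N * L + N * L)))
  (hHform : H = block_mx A (row_mx B 0) (col_mx B^T 0)
                  (block_mx C (blkdiag (fun i => (Dv i)%:M)) (blkdiag Xs) (blkdiag Ys)))
  (hH : clarke (Fmap A B C (blkdiag (fun i => (Dv i)%:M)) l S) (col_mx a (col_mx b c)) H)
  (hEC : forall i, eigencomplementary (Xs i) (Ys i)) :
  let SE := C - B^T *m invmx A *m B in
  blkdiag Ys - blkdiag Xs *m invmx SE *m blkdiag (fun i => (Dv i)%:M) \in unitmx.
Proof.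
cbv zeta; have hP : posdef (invmx (C - B^T *m invmx A *m B)).
  exact/posdef_inv/posdef_schur.
have /boolp.choice[Ps /all_and4[Pu eigX eigY sgn]] :=
  fun i => eigencomplementary_eigenbasis (hEC i).
apply: (codiagonal_schur_unitmx _ _ _ (blkdiag_unit Pu) (blkdiag_eigenbasis eigX)
  (blkdiag_eigenbasis eigY)
  (blkdiag_eigenbasis (e := fun i _ => Dv i) (fun i j => mul_scalar_mx _ _)) _ hP).
- by apply: blkdiag_symmetric => i; have [[]] := hEC i.
- by apply: blkdiag_symmetric => i; have [[]] := hEC i.
- by apply: blkdiag_symmetric => i; apply: tr_scalar_mx.
- case/mxvec_indexP => i j; rewrite !mxvecE !mxE.
  by have [] := sgn i j; split.
Qed.
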